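(* Let $(i,j)\in J$ and let $a_{i,j}=\ell_{i,j}+f_{i,j}(\ell_{i,j}^* )$ be a strongly matricially free Toeplitz operator on $\mathcal{N}$, where $f_{i,j}(w)=\sum_{n=0}^{d}c_{i,j}(n)w^n$ is a polynomial with complex coefficients. Then the R-transform of the distribution $\mu_{i,j}$ of $a_{i,j}$ in the state $\varphi_{i,j}$ is $$R_{i,j}(z)=f_{i,j}(\alpha_{i,j}^2z),$$ where on the right $f_{i,j}$ is the scalar polynomial (constant term the complex number $c_{i,j}(0)$).
   Context: Fock space. Let $J\subseteq\{1,2\}\times\{1,2\}$, $(\alpha_{i,j})_{(i,j)\in J}$ positive reals, $\{e_{i,j}:(i,j)\in J\}$ orthonormal vectors and $\mathcal{F}$ the full Fock space over $\bigoplus_{(i,j)\in J}\mathbb{C}e_{i,j}$ with vacuum $\Omega$. The strongly matricially free Fock space $\mathcal{N}\subseteq\mathcal{F}$ is the closed span of $\Omega$ and all simple tensors $e_{i_1,i_2}^{\otimes n_1}\otimes e_{i_2,i_3}^{\otimes n_2}\otimes\dots\otimes e_{i_{m-1},i_m}^{\otimes n_{m-1}}\otimes e_{i_m,i_m}^{\otimes n_m}$ ($m\ge1$, $n_k\ge1$, $i_1\neq\dots\neq i_m$, all pairs in $J$). With $P$ the projection onto $\mathcal{N}$ and $\ell(e)w=e\otimes w$, set $\ell_{i,j}=\alpha_{i,j}P\ell(e_{i,j})|_{\mathcal{N}}$. Let $\mathcal{N}_{i,j}$ be the closed span of those simple tensors whose first factor is $e_{i,j}$; the internal unit $1_{j,j}$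 is the projection onto $\mathbb{C}\Omega\oplus\mathcal{N}_{j,j}$ and, for $i\neq j$, $1_{i,j}$ is the projection onto $\mathcal{N}\ominus(\mathbb{C}\Omega\oplus\mathcal{N}_{i,i})$. The state $\varphi_{i,j}$ on $B(\mathcal{N})$ is $x\mapsto\langle x\Omega_{i,j},\Omega_{i,j}\rangle$, where $\Omega_{j,j}=\Omega$ and $\Omega_{i,j}=e_{j,j}$ for $i\neq j$ (for off-diagonal $(i,j)$ it is understood that $(j,j)\in J$). The strongly matricially free Toeplitz operator is $a_{i,j}=\ell_{i,j}+f_{i,j}(\ell_{i,j}^* )$ with $f_{i,j}(\ell_{i,j}^* ):=c_{i,j}(0)1_{i,j}+\sum_{n\ge1}c_{i,j}(n)(\ell_{i,j}^* )^n$. The distribution of $x$ in a state $\omega$ is the sequence of moments $\omega(x^n)$; its Cauchy transform is $G(w)=\sum_{n\ge0}\omega(x^n)w^{-n-1}$ (for $|w|$ large) and its R-transform is the power series $R$, analytic near $0$, with $G(1/z+R(z))=z$ for small $|z|>0$. *)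

From HB Require Import structures.
From mathcomp Require Import all_boot all_order all_algebra.
From mathcomp Require Import complex.
From mathcomp Require Import boolp classical_sets reals topology normedtype sequences.

Set Implicit Arguments.
Unset Strict Implicit.
Unset Printing Implicit Defensive.

Import Order.TTheory GRing.Theory Num.Theory.
Import numFieldTopology.Exports numFieldNormedType.Exports.
Local Open Scope ring_scope.

Definition idx := ('I_2 * 'I_2)%type.

(* Simple tensors e_{w_1} (x) ... (x) e_{w_n} of the full Fock space are
   indexed by words w; the empty word is the vacuum Omega.  These simple
   tensors form an orthonormal basis of the full Fock space. *)
Definition word := seq idx.

Section Fock.
Variable C : numClosedFieldType.

(* A vector of the (algebraic) Fock space: a finite formal linear combination
   of basis words. *)
Definition vec := seq (C * word).
(* An operator, given by its values on basis words, extended linearly. *)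
Definition op := word -> vec.

Definition apply (T : op) (v : vec) : vec :=
  flatten [seq [seq (x.1 * y.1, y.2) | y <- T x.2] | x <- v].
(* coefficient of the basis vector u in v, i.e. <v, u> *)
Definition coef (v : vec) (u : word) : C := \sum_(x <- v | x.2 == u) x.1.

Definition op_add (T S : op) : op := fun w => T w ++ S w.
Definition op_scale (c : C) (T : op) : op :=
  fun w => [seq (c * y.1, y.2) | y <- T w].
Definition op_comp (T S : op) : op := fun w => apply T (S w).
Definition op_id : op := fun w => [:: (1, w)].
Definition op_pow (T : op) (n : nat) : op := iter n (op_comp T) op_id.

Definition creation (e : idx) : op := fun w => [:: (1, e :: w)].
Definition annihilation (e : idx) : op := fun w =>
  match w with
  | [::] => [::]
  | e' :: w' => if e' == e then [:: (1, w')] else [::]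
  end.

(* blocks of a sequence of indices i_1, ..., i_m:
   (i_1,i_2), (i_2,i_3), ..., (i_{m-1},i_m), (i_m,i_m) *)
Definition blocks (s : seq 'I_2) : seq idx :=
  zip s (rcons (behead s) (last ord0 s)).

(* the word e_{i1,i2}^{n1} (x) ... (x) e_{im,im}^{nm} belongs to the strongly
   matricially free Fock space N *)
Definition inN (J : {set idx}) (w : word) : Prop :=
  w = [::] \/
  exists (s : seq 'I_2) (ns : seq nat),
    [/\ (0 < size s)%N, size ns = size s, all (fun n => 0 < n)%N ns,
        (forall k, (k.+1 < size s)%N -> nth ord0 s k != nth ord0 s k.+1) &
        (all (fun p => p \in J) (blocks s) /\
         w = flatten [seq nseq x.1 x.2 | x <- zip ns (blocks s)])].

Definition projN (J : {set idx}) : op :=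
  fun w => if `[< inN J w >] then [:: (1, w)] else [::].

(* l_{i,j} = alpha_{i,j} P l(e_{i,j}) |_N  (we precompose with P to encode
   the restriction to N) and its adjoint on N *)
Definition ell (J : {set idx}) (a : C) (e : idx) : op :=
  op_scale a (op_comp (projN J) (op_comp (creation e) (projN J))).
Definition ellstar (J : {set idx}) (a : C) (e : idx) : op :=
  op_scale a (op_comp (projN J) (op_comp (annihilation e) (projN J))).

Definition unit_ij (J : {set idx}) (e : idx) : op := fun w =>
  if `[< inN J w >] &&
     (if e.1 == e.2 then (w == [::]) || (head e w == e)
      else (w != [::]) && (head e w != (e.1, e.1)))
  then [:: (1, w)] else [::].

Definition Omega_ij (e : idx) : word := if e.1 == e.2 then [::] else [:: (e.2, e.2)].

(* strongly matricially free Toeplitz operator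
   a_{i,j} = l_{i,j} + c(0) 1_{i,j} + sum_{n=1}^{d} c(n) (l_{i,j}^* )^n
   with f = p, c(n) = p`_n, d = deg p *)
Definition toeplitz (J : {set idx}) (a : C) (e : idx) (p : {poly C}) : op :=
  op_add (ell J a e)
   (op_add (op_scale p`_0 (unit_ij J e))
      (fun w => flatten [seq op_scale p`_n (op_pow (ellstar J a e) n) w
                        | n <- iota 1 (size p).-1])).

(* the moments phi_{i,j}(x^n) = < x^n Omega_{i,j}, Omega_{i,j} > *)
Definition moment (T : op) (Om : word) (n : nat) : C :=
  coef (op_pow T n Om) Om.

End Fock.

HB.instance Definition _ (R : realType) :=
  PseudoPointedMetric.copy R[i] (R[i])^o.

(* R-transform characterization: with G(w) = sum_n m_n w^{-n-1} (convergent
   for |w| large), R satisfies G(1/z + R(z)) = z for small |z| > 0. *)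
Definition is_R_transform (R : realType) (m : nat -> R[i]) (Rt : R[i] -> R[i]) : Prop :=
  exists (r rho : R), 0 < rho /\
    (forall w : R[i], (r%:C)%C < `|w| ->
        cvgn (series (fun n => m n * w ^- n.+1))) /\
    (forall z : R[i], 0 < `|z| < (rho%:C)%C ->
        (r%:C)%C < `|z^-1 + Rt z| /\
        limn (series (fun n => m n * (z^-1 + Rt z) ^- n.+1)) = z).

From HB Require Import structures.
From mathcomp Require Import all_boot all_order all_algebra.
From mathcomp Require Import complex.
From mathcomp Require Import boolp classical_sets reals topology normedtype sequences.
From mathcomp Require Import zify ring.
Import Order.TTheory GRing.Theory Num.Theory.
Import numFieldTopology.Exports numFieldNormedType.Exports.

Set Implicit Arguments.
Unset Strict Implicit.
Unset Printing Implicit Defensive.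

(* The vectors e_{ij}^{(x)k} (x) Omega_{ij} (k >= 0) lie in N and span a subspace
   that contains Omega_{ij} and is invariant under a_{ij}: l_{ij} raises k by one
   with weight alpha, l_{ij}^* lowers it, and 1_{ij} acts as the identity.  In these
   coordinates a_{ij} is a Toeplitz matrix T, so the n-th moment is (T^n delta_0)(0).
   For z <> 0 the geometric sequence g_k = (alpha z)^k satisfies
   T g = w g - z^-1 delta_0 with w = 1/z + f(alpha^2 z); writing delta_0 through g
   and T g makes sum_n m_n w^(-n-1) telescope to z - z (T^N g)(0) w^-N, and the
   remainder tends to 0 because the sup-norm of T is at most
   K = alpha + sum_n |c(n)| alpha^n while |w| > K once |z| < 1/(2K). *)

Local Open Scope ring_scope.

Section Coefficients.
Variable C : numClosedFieldType.
Implicit Types (v : vec C) (u : word).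

Lemma coefv_nil u : coef ([::] : vec C) u = 0.
Proof. by rewrite /coef big_nil. Qed.

Lemma coefv_cons x v u : coef (x :: v) u = (if x.2 == u then x.1 else 0) + coef v u.
Proof. by rewrite /coef big_cons; case: ifP; rewrite ?add0r. Qed.

Lemma coefv_cat v1 v2 u : coef (v1 ++ v2) u = coef v1 u + coef v2 u.
Proof. by rewrite /coef big_cat. Qed.

Lemma coefv_scale c v u : coef [seq (c * y.1, y.2) | y <- v] u = c * coef v u.
Proof. by rewrite /coef big_map mulr_sumr. Qed.

Lemma coefv_flatten (vs : seq (vec C)) u : coef (flatten vs) u = \sum_(v <- vs) coef v u.
Proof.
elim: vs => [|v vs IH] /=; first by rewrite coefv_nil big_nil.
by rewrite coefv_cat IH big_cons.
Qed.

Lemma coefv_apply (T : op C) v u : coef (apply T v) u = \sum_(x <- v) x.1 * coef (T x.2) u.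
Proof. by rewrite /apply coefv_flatten big_map; apply: eq_bigr => x _; exact: coefv_scale. Qed.

End Coefficients.

Section ToeplitzSequence.
Variables (C : numClosedFieldType) (b : C) (p : {poly C}).

Definition dirac (k : nat) : nat -> C := fun l => (l == k)%:R.

(* The matrix of [toeplitz J b (i, j) p] on the vectors [orbit_word k] (defined
   below), acting on coefficient sequences. *)
Definition toeplitz_seq (f : nat -> C) (m : nat) : C :=
  (if m is m'.+1 then b * f m' else 0) + \sum_(n < size p) p`_n * b ^+ n * f (m + n)%N.

Lemma toeplitz_seq_lincomb (x y : C) f g m :
  toeplitz_seq (fun l => x * f l + y * g l) m = x * toeplitz_seq f m + y * toeplitz_seq g m.
Proof.
rewrite /toeplitz_seq !mulrDr !mulr_sumr addrACA -big_split /=.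
congr (_ + _); first by case: m => [|m]; ring.
by apply: eq_bigr => n _; ring.
Qed.

Lemma toeplitz_seq_sum (I : Type) (r : seq I) (c : I -> C) (g : I -> nat -> C) m :
  toeplitz_seq (fun l => \sum_(x <- r) c x * g x l) m = \sum_(x <- r) c x * toeplitz_seq (g x) m.
Proof.
elim: r => [|x r IH].
  rewrite big_nil /toeplitz_seq big1 => [|n _]; last by rewrite big_nil mulr0.
  by case: m => [|m]; rewrite ?big_nil ?mulr0 addr0.
rewrite big_cons -IH -[X in _ + X]mul1r -toeplitz_seq_lincomb.
by congr toeplitz_seq; apply: funext => l; rewrite big_cons mul1r.
Qed.

Lemma iter_toeplitz_seq_lincomb n (x y : C) f g :
  iter n toeplitz_seq (fun l => x * f l + y * g l) =
  (fun m => x * iter n toeplitz_seq f m + y * iter n toeplitz_seq g m).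
Proof.
elim: n => [|n IH] //=; rewrite IH; apply: funext => m; exact: toeplitz_seq_lincomb.
Qed.

End ToeplitzSequence.

Section VacuumOrbit.
Variables (C : numClosedFieldType) (J : {set idx}) (i j : 'I_2) (b : C) (p : {poly C}).
Hypothesis ij_in_J : (i, j) \in J.
Hypothesis jj_in_J : i != j -> (j, j) \in J.

Local Notation e := (i, j).
Local Notation Om := (Omega_ij e).
Local Notation T := (toeplitz J b e p).

Definition orbit_word (k : nat) : word := nseq k e ++ Om.

Definition orbit_index (w : word) : nat := (size w - size Om)%N.

Lemma orbit_wordK : cancel orbit_word orbit_index.
Proof. by move=> k; rewrite /orbit_index size_cat size_nseq addnK. Qed.

Lemma eq_orbit_word k l : (orbit_word k == orbit_word l) = (k == l).
Proof. exact/inj_eq/can_inj/orbit_wordK. Qed.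

Lemma inN_orbit_word k : inN J (orbit_word k).
Proof.
rewrite /orbit_word /Omega_ij /=; case: eqP => [eij|/eqP nij].
  have ii_in_J : (i, i) \in J by rewrite {2}eij.
  rewrite -eij; case: k => [|k]; first by left.
  by right; exists [:: i], [:: k.+1]; split => //=; rewrite ii_in_J cats0.
case: k => [|k].
  by right; exists [:: j], [:: 1%N]; split => //=; rewrite jj_in_J.
right; exists [:: i; j], [:: k.+1; 1%N]; split => //=; first by case => [|[|]].
by rewrite ij_in_J jj_in_J // cats0.
Qed.

Lemma projN_orbit_word k : projN C J (orbit_word k) = [:: (1, orbit_word k)].
Proof. by rewrite /projN asboolT //; exact: inN_orbit_word. Qed.

Lemma ell_orbit_word k : ell J b e (orbit_word k) = [:: (b, orbit_word k.+1)].
Proof.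
rewrite /ell /op_scale /op_comp projN_orbit_word /apply /=.
by rewrite -[e :: _]/(orbit_word k.+1) projN_orbit_word /= !mulr1.
Qed.

Lemma ellstar_orbit_wordS k : ellstar J b e (orbit_word k.+1) = [:: (b, orbit_word k)].
Proof.
rewrite /ellstar /op_scale /op_comp projN_orbit_word /apply /= eqxx /=.
by rewrite projN_orbit_word /= !mulr1.
Qed.

Lemma ellstar_orbit_word0 : ellstar J b e (orbit_word 0) = [::].
Proof.
rewrite /ellstar /op_scale /op_comp projN_orbit_word /apply /orbit_word /Omega_ij /=.
by case: eqP => [//|/eqP nij] /=; rewrite xpair_eqE eq_sym (negbTE nij).
Qed.

Lemma ellstar_pow_orbit_word n k : op_pow (ellstar J b e) n (orbit_word k) =
  if (n <= k)%N then [:: (b ^+ n, orbit_word (k - n))] else [::].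
Proof.
elim: n => [|n IH]; first by rewrite subn0 expr0.
rewrite /op_pow iterS -/(op_pow _ n) /op_comp IH.
case: (ltngtP n k) => [ltnk|//|->].
  rewrite (_ : k - n = (k - n.+1).+1)%N; last by lia.
  by rewrite /apply /= ellstar_orbit_wordS /= exprSr.
by rewrite subnn /apply /= ellstar_orbit_word0.
Qed.

Lemma unit_ij_orbit_word k : unit_ij C J e (orbit_word k) = [:: (1, orbit_word k)].
Proof.
rewrite /unit_ij asboolT; last exact: inN_orbit_word.
rewrite /orbit_word /Omega_ij /=; case: eqP => [<-|/eqP nij] /=.
  by case: k => [|k] //=; rewrite !eqxx ?orbT.
have nji : (j == i) = false by rewrite eq_sym (negbTE nij).
by case: k => [|k] /=; rewrite xpair_eqE ?eqxx nji.
Qed.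

Lemma coef_orbit_word1 (c : C) k l :
  coef [:: (c, orbit_word k)] (orbit_word l) = c * dirac C k l.
Proof.
rewrite coefv_cons coefv_nil addr0 /= eq_orbit_word eq_sym /dirac.
by case: eqP; rewrite ?mulr1 ?mulr0.
Qed.

Lemma coef_ellstar_pow_orbit_word n k m :
  coef (op_pow (ellstar J b e) n (orbit_word k)) (orbit_word m) = b ^+ n * dirac C k (m + n).
Proof.
rewrite ellstar_pow_orbit_word; case: leqP => [lenk|ltkn].
  rewrite coef_orbit_word1 /dirac; congr (_ * _%:R); apply/eqP/eqP; lia.
by rewrite coefv_nil /dirac (_ : (m + n == k)%N = false) ?mulr0 //; apply/eqP; lia.
Qed.

Lemma coef_toeplitz_orbit_word k m :
  coef (T (orbit_word k)) (orbit_word m) = toeplitz_seq b p (dirac C k) m.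
Proof.
rewrite /toeplitz /op_add !coefv_cat ell_orbit_word coef_orbit_word1.
rewrite /op_scale coefv_scale unit_ij_orbit_word coef_orbit_word1 mul1r.
rewrite coefv_flatten big_map /toeplitz_seq; congr (_ + _).
  by case: m => [|m]; rewrite /dirac /= ?mulr0.
under eq_bigr => n _ do rewrite coefv_scale coef_ellstar_pow_orbit_word mulrA.
rewrite -(big_mkord xpredT (fun n => p`_n * b ^+ n * dirac C k (m + n))).
case: (size p) (nth_default 0 (leqnn (size p))) => [p0|s _].
  by rewrite p0 mul0r add0r !big_geq.
by rewrite /index_iota subn0 big_cons expr0 mulr1 addn0.
Qed.

Definition on_orbit (v : vec C) : bool :=
  all (fun x => orbit_word (orbit_index x.2) == x.2) v.

Lemma on_orbit_toeplitz k : on_orbit (T (orbit_word k)).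
Proof.
rewrite /on_orbit /toeplitz /op_add !all_cat ell_orbit_word /op_scale unit_ij_orbit_word.
rewrite /= !orbit_wordK !eqxx /=; apply/allP => x /flattenP[v /mapP[n _ ->]].
rewrite ellstar_pow_orbit_word; case: leqP => // _ /mapP[y].
by rewrite inE => /eqP-> ->; rewrite /= orbit_wordK.
Qed.

Lemma on_orbit_apply v : on_orbit v -> on_orbit (apply T v).
Proof.
elim: v => [|x v IH] //= /andP[/eqP x_orbit v_orbit].
rewrite /apply /= /on_orbit all_cat all_map; apply/andP; split; last exact: IH.
by rewrite -x_orbit; exact: on_orbit_toeplitz.
Qed.

Lemma coef_on_orbit v l : on_orbit v ->
  coef v (orbit_word l) = \sum_(x <- v) x.1 * dirac C (orbit_index x.2) l.
Proof.
elim: v => [|x v IH] /=; first by rewrite coefv_nil big_nil.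
case/andP=> /eqP x_orbit v_orbit; rewrite coefv_cons big_cons IH //; congr (_ + _).
by rewrite -{1}x_orbit eq_orbit_word /dirac eq_sym; case: eqP; rewrite ?mulr1 ?mulr0.
Qed.

Lemma coef_apply_toeplitz v m : on_orbit v ->
  coef (apply T v) (orbit_word m) = toeplitz_seq b p (fun l => coef v (orbit_word l)) m.
Proof.
move=> v_orbit; rewrite coefv_apply.
rewrite (_ : (fun l => _) = fun l => \sum_(x <- v) x.1 * dirac C (orbit_index x.2) l).
  rewrite toeplitz_seq_sum; apply: eq_big_seq => x x_v; congr (_ * _).
  by move/allP: v_orbit => /(_ x x_v) /eqP {1}<-; rewrite coef_toeplitz_orbit_word.
by apply: funext => l; exact: coef_on_orbit.
Qed.

Lemma on_orbit_pow_toeplitz n : on_orbit (op_pow T n Om).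
Proof.
elim: n => [|n IH]; last exact: on_orbit_apply.
by rewrite /= /op_id /on_orbit /= -[Om]/(orbit_word 0) orbit_wordK eqxx.
Qed.

Lemma coef_pow_toeplitz n l :
  coef (op_pow T n Om) (orbit_word l) = iter n (toeplitz_seq b p) (dirac C 0) l.
Proof.
elim: n l => [|n IH] l.
  by rewrite /= /op_id -[Om]/(orbit_word 0) coef_orbit_word1 mul1r.
rewrite [op_pow _ _ _]/= coef_apply_toeplitz ?on_orbit_pow_toeplitz //=.
by congr toeplitz_seq; apply: funext => k; exact: IH.
Qed.

Lemma moment_toeplitz n : moment T Om n = iter n (toeplitz_seq b p) (dirac C 0) 0.
Proof. by rewrite /moment -(coef_pow_toeplitz n 0). Qed.

End VacuumOrbit.

Section GeometricEigenvector.
Variables (C : numClosedFieldType) (b : C) (p : {poly C}).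

Local Notation T := (toeplitz_seq b p).

(* The point 1/z + R(z) at which the Cauchy transform is evaluated. *)
Definition cauchy_arg (z : C) : C := z^-1 + p.[b ^+ 2 * z].

Definition geom_moment (z : C) (n : nat) : C := iter n T (fun k => (b * z) ^+ k) 0.

Lemma toeplitz_seq_geometric (z : C) m : z != 0 ->
  T (fun k => (b * z) ^+ k) m = cauchy_arg z * (b * z) ^+ m - z^-1 * dirac C 0 m.
Proof.
move=> z_neq0; rewrite /toeplitz_seq /cauchy_arg horner_coef mulrDl mulr_suml.
rewrite (eq_bigr (fun n : 'I_(size p) => p`_n * (b ^+ 2 * z) ^+ n * (b * z) ^+ m)).
  case: m => [|m]; rewrite /dirac /=.
    by rewrite expr0 !mulr1 add0r addrAC subrr add0r.
  by rewrite mulr0 subr0 [(b * z) ^+ m.+1]exprS; congr (_ + _); field.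
by move=> n _; rewrite exprD !exprMn; ring.
Qed.

Lemma dirac0_geometric (z : C) : z != 0 ->
  dirac C 0 = fun l => (z * cauchy_arg z) * (b * z) ^+ l + (- z) * T (fun k => (b * z) ^+ k) l.
Proof. by move=> z_neq0; apply: funext => l; rewrite toeplitz_seq_geometric //; field. Qed.

Lemma iter_dirac0 n (z : C) : z != 0 ->
  iter n T (dirac C 0) 0 = z * cauchy_arg z * geom_moment z n - z * geom_moment z n.+1.
Proof.
move=> z_neq0; rewrite (dirac0_geometric z_neq0) iter_toeplitz_seq_lincomb.
by rewrite /geom_moment iterSr mulNr.
Qed.

Lemma moment_series_telescope N (z : C) : z != 0 -> cauchy_arg z != 0 ->
  \sum_(0 <= n < N) iter n T (dirac C 0) 0 * cauchy_arg z ^- n.+1 =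
  z - z * geom_moment z N * cauchy_arg z ^- N.
Proof.
move=> z_neq0 w_neq0.
have term n : iter n T (dirac C 0) 0 * cauchy_arg z ^- n.+1 =
    - (z * geom_moment z n.+1 * cauchy_arg z ^- n.+1 - z * geom_moment z n * cauchy_arg z ^- n).
  have wn_neq0 : cauchy_arg z ^+ n != 0 by rewrite expf_neq0.
  by rewrite (iter_dirac0 n z_neq0) exprS invfM; field; rewrite wn_neq0 w_neq0.
under eq_bigr => n _ do rewrite term.
by rewrite sumrN telescope_sumr // opprB expr0 invr1 mulr1 /geom_moment /= expr0 mulr1.
Qed.

End GeometricEigenvector.

Section Estimates.
Variables (C : numClosedFieldType) (b : C) (p : {poly C}).

Local Notation T := (toeplitz_seq b p).

Definition toeplitz_bound : C := `|b| + \sum_(n < size p) `|p`_n| * `|b| ^+ n.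

Local Notation K := toeplitz_bound.

Lemma toeplitz_bound_ge_norm : `|b| <= K.
Proof. by rewrite lerDl sumr_ge0 // => n _; rewrite mulr_ge0 ?exprn_ge0. Qed.

Lemma toeplitz_bound_ge0 : 0 <= K.
Proof. exact: le_trans (normr_ge0 _) toeplitz_bound_ge_norm. Qed.

Lemma norm_toeplitz_seq_le f B : (forall l, `|f l| <= B) -> forall m, `|T f m| <= K * B.
Proof.
move=> f_le m; have B_ge0 : 0 <= B := le_trans (normr_ge0 _) (f_le 0%N).
rewrite mulrDl; apply: le_trans (ler_normD _ _) _; apply: lerD.
  by case: m => [|m]; rewrite ?normr0 ?mulr_ge0 // normrM ler_wpM2l.
apply: le_trans (ler_norm_sum _ _ _) _; rewrite mulr_suml; apply: ler_sum => n _.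
by rewrite !normrM normrX ler_wpM2l // mulr_ge0 ?exprn_ge0.
Qed.

Lemma norm_iter_toeplitz_seq_le n f B : (forall l, `|f l| <= B) ->
  forall m, `|iter n T f m| <= K ^+ n * B.
Proof.
move=> f_le; elim: n => [|n IH] m; first by rewrite mul1r.
by rewrite exprS -mulrA; apply: norm_toeplitz_seq_le.
Qed.

Lemma norm_moment_le n : `|iter n T (dirac C 0) 0| <= K ^+ n.
Proof.
rewrite -[K ^+ n]mulr1; apply: norm_iter_toeplitz_seq_le => l.
by rewrite /dirac; case: eqP; rewrite ?normr1 ?normr0.
Qed.

Lemma norm_horner_le x : `|x| <= `|b| -> `|p.[x]| <= K - `|b|.
Proof.
move=> x_le; rewrite addrAC subrr add0r horner_coef.
apply: le_trans (ler_norm_sum _ _ _) _; apply: ler_sum => n _.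
by rewrite normrM normrX ler_wpM2l // lerXn2r ?nnegrE.
Qed.

Section SmallArgument.
Variable z : C.
Hypotheses (z_gt0 : 0 < `|z|) (z_small : `|z| * (2 * K) < 1).

Lemma norm_bz_le1 : `|b * z| <= 1.
Proof.
rewrite normrM mulrC; apply/ltW/(le_lt_trans _ z_small); rewrite ler_wpM2l //.
by rewrite (le_trans toeplitz_bound_ge_norm) // mulr_natl mulr2n lerDr toeplitz_bound_ge0.
Qed.

Lemma cauchy_arg_gt : K < `|cauchy_arg b p z|.
Proof.
have p_le : `|p.[b ^+ 2 * z]| <= K.
  apply: le_trans (norm_horner_le _) _; last by rewrite gerBl.
  by rewrite -mulrA normrM ler_piMr ?norm_bz_le1.
have zV_gt : 2 * K < `|z^-1| by rewrite normfV -div1r ltr_pdivlMr // mulrC.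
apply: lt_le_trans (lerB_normD _ _); rewrite ltrBrDr.
by apply: le_lt_trans zV_gt; rewrite mulr_natl mulr2n lerD2l.
Qed.

Lemma moment_partial_sum_le N :
  `|z - \sum_(0 <= n < N) iter n T (dirac C 0) 0 * cauchy_arg b p z ^- n.+1|
    <= `|z| * (K / `|cauchy_arg b p z|) ^+ N.
Proof.
have w_neq0 : cauchy_arg b p z != 0.
  by rewrite -normr_gt0 (le_lt_trans toeplitz_bound_ge0 cauchy_arg_gt).
have z_neq0 : z != 0 by rewrite -normr_gt0.
rewrite moment_series_telescope // subKr.
rewrite !normrM normfV normrX exprMn exprVn -mulrA ler_wpM2l // ler_wpM2r ?invr_ge0 ?exprn_ge0 //.
rewrite -[K ^+ N]mulr1; apply: norm_iter_toeplitz_seq_le => l.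
by rewrite normrX exprn_ile1 ?norm_bz_le1.
Qed.

End SmallArgument.

End Estimates.

Lemma divr_ge0_lt1 (F : numFieldType) (x y : F) : 0 <= x -> x < y -> 0 <= x / y < 1.
Proof.
move=> x_ge0 x_lt; have y_gt0 := le_lt_trans x_ge0 x_lt.
by rewrite divr_ge0 ?(ltW y_gt0) //= ltr_pdivrMr // mul1r.
Qed.

Local Open Scope classical_set_scope.

Section ComplexSeries.
Variable R : realType.
Local Notation Re := (@complex.Re R).
Local Notation Im := (@complex.Im R).

Lemma normc_real (x : R) : `|x%:C%C| = `|x|%:C%C.
Proof. by rewrite normc_def /= expr0n /= addr0 sqrtr_sqr. Qed.

Lemma nonneg_complex_real (x : R[i]) : 0 <= x -> exists2 r : R, 0 <= r & x = r%:C%C.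
Proof.
move=> x_ge0; exists (Re x); last by rewrite RRe_real // ger0_real.
by move: x_ge0; rewrite lecE => /andP[].
Qed.

Lemma Re_series (u : nat -> R[i]) n : Re (series u n) = series (Re \o u) n.
Proof. exact: (raddf_sum (@complex.Re R : Rcomplex R -> R)). Qed.

Lemma Im_series (u : nat -> R[i]) n : Im (series u n) = series (Im \o u) n.
Proof. exact: (raddf_sum (@complex.Im R : Rcomplex R -> R)). Qed.

Lemma normc_ge_Im (x : R[i]) : `|Im x|%:C%C <= `|x|.
Proof.
rewrite -[Im x]opprK -ReiNIm normrN (le_trans (normc_ge_Re _)) //.
by rewrite normrM complexiE normCi mulr1.
Qed.

Lemma cvg_normc_le (S : nat -> R[i]) (z : R[i]) (v : nat -> R) :
  v @ \oo --> (0 : R) -> (forall n, `|z - S n| <= (v n)%:C%C) ->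
  (S : nat -> (R[i])^o) @ \oo --> (z : (R[i])^o).
Proof.
move=> v_cvg0 S_le; apply/cvgrPdist_lt => e e_gt0.
have [r r_ge0 e_def] := nonneg_complex_real (ltW e_gt0).
have r_gt0 : 0 < r by rewrite -ltcR -e_def.
move/cvgr0Pnorm_lt: v_cvg0 => /(_ r r_gt0); apply: filterS => n vn_lt.
by apply: le_lt_trans (S_le n) _; rewrite e_def ltcR (le_lt_trans (ler_norm _)).
Qed.

Lemma cvg_complex_parts (u : nat -> R[i]) (a c : R) :
  Re \o u @ \oo --> a -> Im \o u @ \oo --> c ->
  (u : nat -> (R[i])^o) @ \oo --> ((a +i* c)%C : (R[i])^o).
Proof.
move=> Re_cvg Im_cvg.
have dist_cvg0 (f : nat -> R) l : f @ \oo --> l -> (fun n => `|l - f n|) @ \oo --> (0 : R).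
  move=> f_cvg; apply/norm_cvg0P; rewrite -(subrr l); apply: cvgB => //; exact: cvg_cst.
apply: (cvg_normc_le (v := fun n => `|a - Re (u n)| + `|c - Im (u n)|)).
  by rewrite -[0]addr0; apply: cvgD; apply: dist_cvg0.
move=> n; have -> : (a +i* c)%C - u n = (a - Re (u n))%:C%C + 'i%C * (c - Im (u n))%:C%C.
  by case: (u n) => x y; apply/eqP; rewrite eq_complex /=; simpc.
apply: le_trans (ler_normD _ _) _.
by rewrite normrM complexiE normCi mul1r !normc_real rmorphD.
Qed.

Lemma cvg_real_series_geometric_bound (v : nat -> R) (M q : R) : 0 <= q < 1 ->
  (forall n, `|v n| <= M * q ^+ n) -> cvgn (series v).
Proof.
case/andP=> q_ge0 q_lt1 v_le; apply: normed_cvg.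
have M_ge0 : 0 <= M by have := v_le 0%N; rewrite mulr1; exact: le_trans.
apply: (@series_le_cvg R _ (fun n => M * q ^+ n)) => [n|n|//|].
- exact: normr_ge0.
- by rewrite mulr_ge0 ?exprn_ge0.
by apply/cvg_ex; exists (M / (1 - q)); apply: cvg_geometric_series; rewrite ger0_norm.
Qed.

Lemma cvg_series_geometric_bound (u : nat -> R[i]) (M q : R[i]) : 0 <= q < 1 ->
  (forall n, `|u n| <= M * q ^+ n) -> cvgn (series (u : nat -> (R[i])^o)).
Proof.
case/andP=> q_ge0 q_lt1 u_le.
have [M' M'_ge0 M_def] : exists2 M', 0 <= M' & M = M'%:C%C.
  by apply: nonneg_complex_real; have := u_le 0%N; rewrite mulr1; exact: le_trans.
have [q' q'_ge0 q_def] := nonneg_complex_real q_ge0.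
have q'_bounds : 0 <= q' < 1 by rewrite q'_ge0 -ltcR -q_def.
rewrite {}M_def {}q_def in u_le.
have part_le (f : R[i] -> R) : (forall x, `|f x|%:C%C <= `|x|) ->
    forall n, `|f (u n)| <= M' * q' ^+ n.
  by move=> f_le n; rewrite -lecR rmorphM rmorphXn; exact: le_trans (f_le _) (u_le n).
have /cvg_ex[a Re_cvg] := cvg_real_series_geometric_bound q'_bounds (part_le _ (@normc_ge_Re R)).
have /cvg_ex[c Im_cvg] := cvg_real_series_geometric_bound q'_bounds (part_le _ normc_ge_Im).
apply/cvg_ex; exists ((a +i* c)%C : (R[i])^o); apply: cvg_complex_parts.
- by rewrite (_ : _ \o _ = series (Re \o u)) //; apply: funext => n /=; rewrite Re_series.
- by rewrite (_ : _ \o _ = series (Im \o u)) //; apply: funext => n /=; rewrite Im_series.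
Qed.

Lemma cvg_geometric_bound (S : nat -> R[i]) (z M q : R[i]) : 0 <= q < 1 ->
  (forall n, `|z - S n| <= M * q ^+ n) -> (S : nat -> (R[i])^o) @ \oo --> (z : (R[i])^o).
Proof.
case/andP=> q_ge0 q_lt1 S_le.
have [M' _ M_def] : exists2 M', 0 <= M' & M = M'%:C%C.
  by apply: nonneg_complex_real; have := S_le 0%N; rewrite mulr1; exact: le_trans.
have [q' q'_ge0 q_def] := nonneg_complex_real q_ge0.
apply: (cvg_normc_le (v := geometric M' q')).
  by apply: cvg_geometric; rewrite ger0_norm // -ltcR -q_def.
by move=> n; rewrite /= rmorphM rmorphXn; move: (S_le n); rewrite M_def q_def.
Qed.

Lemma cvg_moment_series (m : nat -> R[i]) (K w : R[i]) : 0 <= K ->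
  (forall n, `|m n| <= K ^+ n) -> K < `|w| ->
  cvgn (series ((fun n => m n * w ^- n.+1) : nat -> (R[i])^o)).
Proof.
move=> K_ge0 m_le K_lt; have w_gt0 : 0 < `|w| := le_lt_trans K_ge0 K_lt.
apply: (@cvg_series_geometric_bound _ (`|w|^-1) (K / `|w|)); first exact: divr_ge0_lt1.
move=> n; rewrite normrM normfV normrX exprMn exprVn exprS invfM mulrCA.
by rewrite ler_wpM2l ?invr_ge0 // ler_wpM2r ?invr_ge0 ?exprn_ge0.
Qed.

End ComplexSeries.

Theorem proposition4p1 (R : realType) (J : {set idx}) (alpha : idx -> R)
  (i j : 'I_2) (p : {poly R[i]}) :
  (forall e, e \in J -> 0 < alpha e) ->
  (i, j) \in J ->
  (i != j -> (j, j) \in J) ->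
  is_R_transform
    (moment (toeplitz J ((alpha (i, j))%:C)%C (i, j) p) (Omega_ij (i, j)))
    (fun z => p.[((alpha (i, j) ^+ 2)%:C)%C * z]).
Proof.
move=> alpha_gt0 ij_in_J jj_in_J.
set b : R[i] := (alpha (i, j))%:C%C.
have b_gt0 : 0 < `|b| by rewrite normc_real ltcR normr_gt0 gt_eqF ?alpha_gt0.
rewrite (funext (moment_toeplitz b p ij_in_J jj_in_J)) rmorphXn -/b.
set K := toeplitz_bound b p.
have K_gt0 : 0 < K := lt_le_trans b_gt0 (toeplitz_bound_ge_norm b p).
have [k k_ge0 K_def] := nonneg_complex_real (ltW K_gt0).
have k_gt0 : 0 < k by rewrite -ltcR -K_def.
exists k, (2 * k)^-1; split; first by rewrite invr_gt0 mulr_gt0.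
split=> [w|z /andP[z_gt0 z_lt]].
  by rewrite -K_def; apply: cvg_moment_series (ltW K_gt0) (norm_moment_le b p).
have z_small : `|z| * (2 * K) < 1.
  rewrite -ltr_pdivlMr ?mulr_gt0 // div1r; apply: (lt_le_trans z_lt).
  by rewrite fmorphV rmorphM rmorph_nat K_def; apply: lexx.
have w_gt : K < `|cauchy_arg b p z| := cauchy_arg_gt z_gt0 z_small.
split; first by rewrite -K_def.
apply: (cvg_lim (@norm_hausdorff _ (R[i])^o)).
apply: (cvg_geometric_bound (M := `|z|) (q := K / `|cauchy_arg b p z|)).
  exact: divr_ge0_lt1 (ltW K_gt0) w_gt.
exact: moment_partial_sum_le.
Qed.
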